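(* Let $N\in\mathbb{N}$ and real constants $C_{\alpha_1,\ldots,\alpha_k}$ ($\alpha_1+\cdots+\alpha_k=N$) be given, and let $P(b_2,\ldots,b_k):=\sum_{\alpha_1+\cdots+\alpha_k=N}C_{\alpha_1,\ldots,\alpha_k}b_2^{\alpha_2}b_3^{\alpha_3}\cdots b_k^{\alpha_k}$. Suppose there exist vectors $e_1=1=\sum_{r=1}^mI_r$, $e_j=\sum_{r=1}^na_{jr}I_r$ ($a_{jr}\in\mathbb{C}$, $j=2,\ldots,k$) in $\mathbb{A}_n^m$, linearly independent over $\mathbb{R}$, satisfying $$\sum_{\alpha_1+\cdots+\alpha_k=N}C_{\alpha_1,\ldots,\alpha_k}\,e_2^{\alpha_2}e_3^{\alpha_3}\cdots e_k^{\alpha_k}=0.$$ If $P(b_2,\ldots,b_k)\ne0$ for all real $b_2,\ldots,b_k$, then $f_u(E_k)=\mathbb{C}$ for all $u=1,\ldots,m$, where $E_k$ is the real linear span of $e_1,\ldots,e_k$.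
   Context: Fix integers $1\le m\le n$ and $2\le k\le 2n$. $\mathbb{A}_n^m$ is an $n$-dimensional commutative associative algebra with unit over $\mathbb{C}$ having a basis $\{I_r\}_{r=1}^n$ with the multiplication rules: (1) for $r,s\in\{1,\ldots,m\}$: $I_rI_s=0$ if $r\ne s$ and $I_rI_r=I_r$; (2) for $r,s\in\{m+1,\ldots,n\}$: $I_rI_s=\sum_{p=\max\{r,s\}+1}^n\Upsilon^s_{r,p}I_p$ with $\Upsilon^s_{r,p}\in\mathbb{C}$; (3) for each $s\in\{m+1,\ldots,n\}$ there is a unique $u_s\in\{1,\ldots,m\}$ such that for all $r\in\{1,\ldots,m\}$: $I_rI_s=I_s$ if $r=u_s$ and $I_rI_s=0$ otherwise. The unit is $\sum_{u=1}^mI_u$. For $u=1,\ldots,m$, $f_u:\mathbb{A}_n^m\to\mathbb{C}$ is the linear functional $f_u(\sum_r\lambda_rI_r)=\lambda_u$, and $f_u(E_k):=\{f_u(\zeta):\zeta\in E_k\}$. *)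

(* The complex field C is taken to be an arbitrary
   numClosedFieldType (e.g. algC, or the complex numbers); "real" means
   x \is Num.real. *)
From HB Require Import structures.
From mathcomp Require Import all_boot all_order all_algebra.
Set Implicit Arguments. Unset Strict Implicit. Unset Printing Implicit Defensive.
Import Order.TTheory GRing.Theory Num.Theory.
Local Open Scope ring_scope.

Section Algebra.
Variables (C : numClosedFieldType) (n m : nat).
(* Indices are 0-based: I_r for r : 'I_n; r < m are the idempotents. *)
Variable (Ups : 'I_n -> 'I_n -> 'I_n -> C). (* Ups s r p = Upsilon^s_{r,p} *)
Variable (us : 'I_n -> 'I_n).                (* us s = u_s for s >= m *)

(* elements of A_n^m are coordinate row vectors w.r.t. the basis I_r *)
Definition basisI (r : 'I_n) : 'rV[C]_n := delta_mx 0 r.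

Definition Iprod (r s : 'I_n) : 'rV[C]_n :=
  if (r < m)%N && (s < m)%N then (if r == s then basisI r else 0)
  else if (r < m)%N then (if us s == r then basisI s else 0)
  else if (s < m)%N then (if us r == s then basisI r else 0)
  else \sum_(p : 'I_n | (maxn r s < p)%N) Ups s r p *: basisI p.

Definition amul (x y : 'rV[C]_n) : 'rV[C]_n :=
  \sum_(r : 'I_n) \sum_(s : 'I_n) (x 0 r * y 0 s) *: Iprod r s.

Definition aunit : 'rV[C]_n := \sum_(u : 'I_n | (u < m)%N) basisI u.

Definition apow (x : 'rV[C]_n) (a : nat) : 'rV[C]_n := iter a (amul x) aunit.

Definition fu (u : 'I_n) (x : 'rV[C]_n) : C := x 0 u.

Definition inEk (k : nat) (e : 'I_k -> 'rV[C]_n) (x : 'rV[C]_n) : Prop :=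
  exists t : 'I_k -> C, (forall j, t j \is Num.real) /\ x = \sum_(j : 'I_k) t j *: e j.
End Algebra.

Definition multi_ok (k N : nat) (al : {ffun 'I_k -> 'I_N.+1}) : bool :=
  (\sum_(j : 'I_k) (al j : nat) == N)%N.

(** For [u < m] the coordinate functional [f_u] is a unital ring homomorphism
    from [A_n^m] onto [C], because the idempotent [I_u] annihilates every other
    basis product.  Applying [f_u] to the relation between the [e_j] therefore
    gives [P(f_u e_2, ..., f_u e_k) = 0]; since [P] has no real zero, some
    [f_u e_j] with [j >= 2] is non-real, and together with [f_u e_1 = 1] it
    spans [C] over the reals. *)

From HB Require Import structures.
From mathcomp Require Import all_boot all_order all_algebra.
From mathcomp Require Import ring.
Set Implicit Arguments. Unset Strict Implicit. Unset Printing Implicit Defensive.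
Import Order.TTheory GRing.Theory Num.Theory.
Local Open Scope ring_scope.

Lemma real_span_nonreal (C : numClosedFieldType) (w z : C) :
  w \notin Num.real ->
  exists a b : C, [/\ a \is Num.real, b \is Num.real & z = a + b * w].
Proof.
move=> w_nonreal.
have Imw_neq0 : 'Im w != 0 by apply: contra w_nonreal => /eqP/Creal_ImP.
set a := 'Re w; set b := 'Im w; set c := 'Re z; set d := 'Im z.
exists (c - d / b * a), (d / b).
split; rewrite ?(rpredB, rpredM, rpredV, Creal_Re, Creal_Im) //.
rewrite [z]Crect [w]Crect -/a -/b -/c -/d.
by field.
Qed.

Section CoordinateHomomorphism.
Variables (C : numClosedFieldType) (n m : nat).
Variables (Ups : 'I_n -> 'I_n -> 'I_n -> C) (us : 'I_n -> 'I_n).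
Variable u : 'I_n.
Hypothesis u_lt_m : (u < m)%N.

Local Notation amul := (amul m Ups us).
Local Notation aunit := (aunit C n m).
Local Notation apow := (apow m Ups us).

Lemma fu_basisI (r : 'I_n) : fu u (basisI C r) = (r == u)%:R.
Proof. by rewrite /fu /basisI mxE eqxx eq_sym. Qed.

Lemma fu_Iprod (r s : 'I_n) : fu u (Iprod m Ups us r s) = ((r == u) && (s == u))%:R.
Proof.
have neq_u (x : 'I_n) : (m <= x)%N -> (x == u) = false.
  by move=> m_le_x; apply/eqP => xu; move: m_le_x; rewrite xu leqNgt u_lt_m.
rewrite /Iprod; case: (ltnP r m) => rm; case: (ltnP s m) => sm /=.
- case: (eqVneq r s) => [<-|r_neq_s]; first by rewrite fu_basisI andbb.
  rewrite /fu mxE; case: (eqVneq r u) => [ru|] //=.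
  by rewrite -ru eq_sym (negPf r_neq_s).
- rewrite (neq_u s sm) andbF; case: ifP => _; last by rewrite /fu mxE.
  by rewrite fu_basisI neq_u.
- rewrite (neq_u r rm) /=; case: ifP => _; last by rewrite /fu mxE.
  by rewrite fu_basisI neq_u.
- rewrite (neq_u r rm) /fu summxE big1 // => p /= r_lt_p.
  rewrite mxE -/(fu u _) fu_basisI neq_u ?mulr0 //.
  exact: leq_trans rm (ltnW (leq_ltn_trans (leq_maxl _ _) r_lt_p)).
Qed.

Lemma fu_amul (x y : 'rV[C]_n) : fu u (amul x y) = fu u x * fu u y.
Proof.
rewrite /amul /fu summxE.
under eq_bigr => r _ do
  (rewrite summxE; under eq_bigr => s _ do rewrite mxE -/(fu u _) fu_Iprod).
rewrite (bigD1 u) //= (bigD1 u) //= !big1 => [|r /negPf r_neq_u|s /negPf s_neq_u].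
- by rewrite eqxx mulr1 !addr0.
- by rewrite big1 // => s _; rewrite r_neq_u mulr0.
- by rewrite s_neq_u andbF mulr0.
Qed.

Lemma fu_aunit : fu u aunit = 1.
Proof.
rewrite /fu /aunit summxE (bigD1 u) //= big1 => [|r /andP[_ r_neq_u]].
  by rewrite -/(fu u _) fu_basisI eqxx addr0.
by rewrite -/(fu u _) fu_basisI (negPf r_neq_u).
Qed.

Lemma fu_apow (x : 'rV[C]_n) (a : nat) : fu u (apow x a) = fu u x ^+ a.
Proof.
elim: a => [|a IHa]; first exact: fu_aunit.
by rewrite /apow iterS -/(apow _ _) fu_amul IHa exprS.
Qed.

Lemma fu_big_amul (J : finType) (Q : pred J) (x : J -> 'rV[C]_n) :
  fu u (\big[amul/aunit]_(j | Q j) x j) = \prod_(j | Q j) fu u (x j).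
Proof. exact: (big_morph (fu u) fu_amul fu_aunit). Qed.

Lemma fu_polynomial (I J : finType) (P : pred I) (Q : pred J)
    (c : I -> C) (x : J -> 'rV[C]_n) (a : I -> J -> nat) :
  fu u (\sum_(i | P i) c i *: \big[amul/aunit]_(j | Q j) apow (x j) (a i j)) =
  \sum_(i | P i) c i * \prod_(j | Q j) fu u (x j) ^+ a i j.
Proof.
rewrite /fu summxE; apply: eq_bigr => i _.
by rewrite mxE -/(fu u _) fu_big_amul; under eq_bigr do rewrite fu_apow.
Qed.

End CoordinateHomomorphism.

Lemma inEk_pair (C : numClosedFieldType) (n k : nat) (e : 'I_k -> 'rV[C]_n)
    (i j : 'I_k) (a b : C) :
  i != j -> a \is Num.real -> b \is Num.real -> inEk e (a *: e i + b *: e j).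
Proof.
move=> i_neq_j a_real b_real.
exists (fun l => (if l == i then a else 0) + (if l == j then b else 0)); split.
  by move=> l; apply: rpredD; case: ifP; rewrite ?rpred0.
have sum_delta (l0 : 'I_k) (x : C) :
    \sum_l (if l == l0 then x else 0) *: e l = x *: e l0.
  by rewrite (bigD1 l0) //= eqxx big1 ?addr0 // => l /negPf->; rewrite scale0r.
by under eq_bigr do rewrite scalerDl; rewrite big_split /= !sum_delta.
Qed.

Theorem theorem4 (C : numClosedFieldType) (n m k N : nat)
  (Ups : 'I_n -> 'I_n -> 'I_n -> C) (us : 'I_n -> 'I_n)
  (Hm1 : (1 <= m)%N) (Hmn : (m <= n)%N) (Hk2 : (2 <= k)%N) (Hkn : (k <= 2 * n)%N)
  (Hus : forall s : 'I_n, (m <= s)%N -> (us s < m)%N)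
  (Hcomm : forall x y : 'rV[C]_n, amul m Ups us x y = amul m Ups us y x)
  (Hassoc : forall x y z : 'rV[C]_n,
      amul m Ups us x (amul m Ups us y z) = amul m Ups us (amul m Ups us x y) z)
  (c : {ffun 'I_k -> 'I_N.+1} -> C)
  (Hc : forall al, multi_ok al -> c al \is Num.real)
  (e : 'I_k -> 'rV[C]_n)
  (He1 : forall j : 'I_k, nat_of_ord j = 0%N -> e j = @aunit C n m)
  (Hind : forall t : 'I_k -> C, (forall j, t j \is Num.real) ->
      \sum_(j : 'I_k) t j *: e j = 0 -> forall j, t j = 0)
  (Heq : \sum_(al | multi_ok al) c al *:
           \big[amul m Ups us / @aunit C n m]_(j : 'I_k | nat_of_ord j != 0%N)
              apow m Ups us (e j) (al j) = 0)
  (HP : forall b : 'I_k -> C, (forall j, b j \is Num.real) ->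
      \sum_(al | multi_ok al) c al *
        \prod_(j : 'I_k | nat_of_ord j != 0%N) b j ^+ (al j) != 0) :
  forall u : 'I_n, (u < m)%N ->
    forall z : C, exists x : 'rV[C]_n, @inEk C n k e x /\ fu u x = z.
Proof.
move=> u u_lt_m z.
pose j0 : 'I_k := Ordinal (ltnW Hk2).
have fu_e0 : fu u (e j0) = 1 by rewrite He1 // fu_aunit.
have [j fu_ej_nonreal] : exists j, fu u (e j) \notin Num.real.
  apply/existsP; apply: contraT; rewrite negb_exists => /forallP all_real.
  have := HP (fun j => fu u (e j)) (fun j => negbNE (all_real j)).
  by rewrite -(fu_polynomial Ups us u_lt_m) Heq /fu mxE eqxx.
have j0_neq_j : j0 != j by apply: contraNneq fu_ej_nonreal => <-; rewrite fu_e0.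
have [a [b [a_real b_real ->]]] := real_span_nonreal z fu_ej_nonreal.
exists (a *: e j0 + b *: e j); split; first exact: inEk_pair.
by rewrite /fu !mxE -!/(fu u _) fu_e0 mulr1.
Qed.
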